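(* Let $\mathcal{I}=(N,M,\mathcal{V})$ be a fair division instance with additive valuations, let $\epsilon\ge 0$, and let $\mathcal{I}'=(N',M',\mathcal{V}')=\mathtt{reduce}(\mathcal{I},\epsilon)$. Then for every agent $i\in N'$, $\mathrm{MMS}_i(\mathcal{I}')=\mathrm{MMS}^{|N'|}_{v'_i}(M')\ge 1-4\epsilon$.
   Context: An instance $(N,M,\mathcal{V})$ has agents $N=[n]$, a finite set $M$ of $m$ indivisible goods, and additive valuations $v_i:2^M\to\mathbb{R}_{\ge0}$. For a valuation $v$, a set $S$ and integer $d\ge1$, $\mathrm{MMS}^d_v(S)$ is the maximum over all partitions $(P_1,\dots,P_d)$ of $S$ into $d$ bundles of $\min_j v(P_j)$; $\mathrm{MMS}_i=\mathrm{MMS}^{n}_{v_i}(M)$. An instance is ordered if $M=[m]$ and $v_i(1)\ge v_i(2)\ge\dots\ge v_i(m)$ for every agent $i$. For $\mathcal{I}=([n],[m],\mathcal{V})$, $\mathtt{order}(\mathcal{I})=([n],[m],\mathcal{V}')$ where $v'_i(j)$ is the $j$-th largest number in the multiset $\{v_i(g):g\in[m]\}$. Reduction rules for an ordered instance with $n$ agents and threshold $\alpha$: $R^\alpha_1$ is applicable if some agent $i$ has $v_i(\{1\})\ge\alpha$; $R^\alpha_2$ if some $i$ has $v_i(\{2n-1,2n,2n+1\})\ge\alpha$; $R^\alpha_3$ if some $i$ has $v_i(\{3n-2,3n-1,3n,3n+1\})\ge\alpha$; $R^\alpha_4$ if some $i$ has $v_i(\{1,2n+1\})\ge\alpha$.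 Applying the rule gives the corresponding set to such an agent $i$ and removes $i$ and these goods; the remaining goods are re-indexed $1,2,\dots$ preserving their order (so the instance remains ordered). $\mathtt{reduce}(\mathcal{I},\epsilon)$: (1) replace $\mathcal{I}$ by $\mathtt{order}(\mathcal{I})$; (2) for every agent $i$ and good $g$ set $v_i(g)\leftarrow v_i(g)/\mathrm{MMS}_i$ (so every agent's MMS value becomes $1$); (3) while one of $R^{3/4+\epsilon}_1,R^{3/4+\epsilon}_2,R^{3/4+\epsilon}_3,R^{3/4+\epsilon}_4$ is applicable, apply $R^{3/4+\epsilon}_k$ for the smallest applicable $k$. The output is the instance formed by the remaining agents, remaining goods and the valuations from step (2). *)

From mathcomp Require Import all_boot all_order all_algebra.
Set Implicit Arguments. Unset Strict Implicit. Unset Printing Implicit Defensive.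
Import Order.TTheory GRing.Theory Num.Theory.
Local Open Scope ring_scope.

(* Goods are represented by natural numbers (original indices of the ordered
   instance, 0-based); a set of goods is a duplicate-free seq G of goods. *)

Definition bundle_val {R : numDomainType} (v : nat -> R) (G : seq nat) (d : nat)
  (f : {ffun 'I_(size G) -> 'I_d}) (j : 'I_d) : R :=
  \sum_(p < size G | f p == j) v (nth 0%N G p).

(* MMS^d_v(G) = max over partitions (P_1..P_d) of G of min_j v(P_j).
   The seeds (0 for max, v(G) for min) are neutral for nonnegative v and d >= 1. *)
Definition MMSd {R : realDomainType} (d : nat) (v : nat -> R) (G : seq nat) : R :=
  \big[Num.max/0]_(f : {ffun 'I_(size G) -> 'I_d})
     \big[Num.min/ \sum_(g <- G) v g]_(j < d) bundle_val v f j.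

(* order(I): v'_i(j) = the (j+1)-th largest value of agent i (0-based j);
   0 for j >= m. *)
Definition ordv {R : realDomainType} (n m : nat) (v : 'I_n -> 'I_m -> R)
  (i : 'I_n) (j : nat) : R :=
  nth 0 (sort (fun x y : R => y <= x) [seq v i g | g <- enum 'I_m]) j.

Definition normv {R : realFieldType} (n m : nat) (v : 'I_n -> 'I_m -> R)
  (i : 'I_n) (j : nat) : R :=
  ordv v i j / MMSd n (ordv v i) (iota 0 m).

(* 0-based positions used by rule R_k when there are na agents:
   R1: {1}; R2: {2na-1,2na,2na+1}; R3: {3na-2,..,3na+1}; R4: {1,2na+1}. *)
Definition rule_pos (k na : nat) : seq nat :=
  match k with
  | 1 => [:: 0]
  | 2 => [:: (2 * na - 2); (2 * na - 1); (2 * na)]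
  | 3 => [:: (3 * na - 3); (3 * na - 2); (3 * na - 1); (3 * na)]
  | 4 => [:: 0; (2 * na)]
  | _ => [::]
  end%N.

(* the goods at these positions among the remaining goods G (listed in order);
   a missing position yields the dummy good m, which has value 0. *)
Definition rule_goods (m : nat) (G : seq nat) (k na : nat) : seq nat :=
  [seq nth m G p | p <- rule_pos k na].

Definition rule_val {R : numDomainType} (n m : nat) (w : 'I_n -> nat -> R)
  (A : seq 'I_n) (G : seq nat) (k : nat) (i : 'I_n) : R :=
  \sum_(g <- rule_goods m G k (size A)) w i g.

Definition applicable {R : numDomainType} (n m : nat) (alpha : R)
  (w : 'I_n -> nat -> R) (A : seq 'I_n) (G : seq nat) (k : nat) : Prop :=
  exists2 i, i \in A & alpha <= rule_val m w A G k i.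

Definition red_step {R : numDomainType} (n m : nat) (alpha : R)
  (w : 'I_n -> nat -> R) (A : seq 'I_n) (G : seq nat)
  (A' : seq 'I_n) (G' : seq nat) : Prop :=
  exists k i,
    [/\ (1 <= k <= 4)%N,
        (forall k', (1 <= k' < k)%N -> ~ applicable m alpha w A G k'),
        i \in A, alpha <= rule_val m w A G k i &
        (A' = rem i A /\
         G' = [seq g <- G | g \notin rule_goods m G k (size A)])].

Inductive red_reach {R : numDomainType} (n m : nat) (alpha : R)
  (w : 'I_n -> nat -> R) (A0 : seq 'I_n) (G0 : seq nat) :
  seq 'I_n -> seq nat -> Prop :=
| red_refl : red_reach m alpha w A0 G0 A0 G0
| red_next : forall A G A' G', red_reach m alpha w A0 G0 A G ->
    red_step m alpha w A G A' G' -> red_reach m alpha w A0 G0 A' G'.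

(* (A, G) is a possible output of reduce(I, eps): remaining agents A and
   remaining goods G (original indices of order(I)), valuations normv v. *)
Definition reduce_output {R : realFieldType} (n m : nat) (v : 'I_n -> 'I_m -> R)
  (eps : R) (A : seq 'I_n) (G : seq nat) : Prop :=
  red_reach m (3 / 4 + eps) (normv v) (enum 'I_n) (iota 0 m) A G /\
  (forall k, (1 <= k <= 4)%N -> ~ applicable m (3 / 4 + eps) (normv v) A G k).

(* Fix an agent [i] that is never removed and let [alpha = 3/4 + eps].  Call a
   bundle good if it splits into a base part worth at least [1 - k alpha / 3]
   and [k <= 3] extra parts worth at least [1 - alpha] each; such a bundle is
   worth at least [1 + k (1 - 4 alpha / 3) >= 4 - 4 alpha = 1 - 4 eps] to [i].
   At every stage of the reduction the remaining goods split into as many good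
   bundles as there are remaining agents [n]; initially take an MMS partition
   of the normalised instance, with all [k = 0].
   R1 removes one good, and we drop its bundle.  R2 and R3 remove a block of
   [r] goods preceded by at least [(r - 1)(n - 1)] more valuable goods, so by
   pigeonhole some bundle holds at least [r] goods among these positions;
   swapping its goods of the first positions with the removed goods outside it
   makes it contain the whole block, and we drop it.  R4 is used only when R1
   and R2 are not applicable, so good 1 is worth less than [alpha] and good
   [2n+1] at most [alpha / 3].  If they lie in different bundles, the rest of
   the bundle of good 1 (worth at least [1 - alpha]) replaces good [2n+1] in
   its bundle, as a new extra part or inside the part of good [2n+1], and we
   drop the bundle holding both removed goods. *)

From mathcomp Require Import all_boot all_order all_algebra.
From mathcomp Require Import zify.
From mathcomp.algebra_tactics Require Import ring lra.
Import Order.TTheory GRing.Theory Num.Theory.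
Local Open Scope ring_scope.
Set Implicit Arguments. Unset Strict Implicit. Unset Printing Implicit Defensive.

Lemma ler_sum_predW (R : numDomainType) (I : eqType) (r : seq I) (P Q : pred I)
    (F : I -> R) :
  {in r, forall x, 0 <= F x} -> {in r, forall x, P x -> Q x} ->
  \sum_(x <- r | P x) F x <= \sum_(x <- r | Q x) F x.
Proof.
move=> F_ge0 PQ; rewrite (big_mkcond P) (big_mkcond Q) !big_seq.
apply: ler_sum => x xr; case: ifP => [/(PQ x xr) -> //|_].
by case: ifP => // _; apply: F_ge0.
Qed.

Lemma ler_sumD1 (R : numDomainType) (I : eqType) (r : seq I) (P : pred I)
    (F : I -> R) y :
  uniq r -> y \in r -> {in r, forall x, 0 <= F x} ->
  \sum_(x <- r | P x) F x <= \sum_(x <- r | P x && (x != y)) F x + F y.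
Proof.
move=> r_uniq yr F_ge0; rewrite big_mkcond (bigD1_seq y) //= addrC.
apply: lerD; last by case: (P y) => //; apply: F_ge0.
by rewrite [leRHS]big_mkcondl.
Qed.

Definition swapn (x a g : nat) : nat :=
  if g == x then a else if g == a then x else g.

Lemma swapnK x a : involutive (swapn x a).
Proof. by move=> g; rewrite /swapn; do !case: eqP => //=; congruence. Qed.

Lemma swapnC x a : swapn x a =1 swapn a x.
Proof. by move=> g; rewrite /swapn; do !case: eqP => //=; congruence. Qed.

Lemma perm_map_swapn (G : seq nat) x a :
  uniq G -> x \in G -> a \in G -> perm_eq (map (swapn x a) G) G.
Proof.
move=> G_uniq xG aG; apply: uniq_perm => //.
  by rewrite map_inj_uniq //; apply: can_inj (swapnK x a).
have mem_swapn g : (swapn x a g \in G) = (g \in G).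
  by rewrite /swapn; do !case: eqP => [->|_]; rewrite ?xG ?aG.
move=> y; apply/mapP/idP => [[z zG ->]|yG]; first by rewrite mem_swapn.
by exists (swapn x a y); rewrite ?mem_swapn ?swapnK.
Qed.

Lemma count_swapn (P : pred nat) (L : seq nat) x a :
  uniq L -> x \in L -> a \notin L ->
  (count (P \o swapn x a) L + P x = count P L + P a)%N.
Proof.
move=> L_uniq xL aL; have /permP count_rem := perm_to_rem xL.
rewrite !count_rem /= {1}/swapn eqxx.
suff -> : count (P \o swapn x a) (rem x L) = count P (rem x L) by lia.
apply: eq_in_count => y; rewrite mem_rem_uniq // inE => /andP[yx yL] /=.
by rewrite /swapn (negbTE yx); case: eqP => // ya; rewrite -ya yL in aL.
Qed.

Lemma pigeonhole_label na (L : seq nat) (s : nat -> nat) :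
  (0 < na)%N -> {in L, forall g, (s g < na)%N} ->
  exists2 B, (B < na)%N & (size L <= count (fun g => s g == B) L * na)%N.
Proof.
case: na => // na _ lt_s.
pose c (B : 'I_na.+1) := count (fun g => s g == B) L.
have [B _ Bmax] := @arg_maxnP _ ord0 xpredT c isT.
exists B => //; rewrite mulnC -[X in (_ <= X * _)%N]card_ord -sum_nat_const.
have -> : size L = \sum_(j < na.+1) c j.
  rewrite /c; under eq_bigr do rewrite -sum1_count big_mkcond.
  rewrite exchange_big /= -sum1_size !big_seq; apply: eq_bigr => g gL.
  rewrite (bigD1 (Ordinal (lt_s g gL))) //= eqxx big1 ?addn0 // => j neq_j.
  by case: eqP => // sgj; move: neq_j; rewrite -val_eqE /= sgj eqxx.
by apply: leq_sum => j _; apply: Bmax.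
Qed.

Section Bundles.
Variables (R : realFieldType) (w : nat -> R) (alpha : R).
Hypothesis w_ge0 : forall g, 0 <= w g.
Implicit Types (G X Xs Ys : seq nat) (s p k : nat -> nat).

Definition part_val (G : seq nat) (s p : nat -> nat) (j q : nat) : R :=
  \sum_(g <- G | (s g == j) && (p g == q)) w g.

Definition part_bound (k q : nat) : R :=
  if q == 0%N then 1 - k%:R * (alpha / 3) else 1 - alpha.

Definition good_bundle (G : seq nat) (s p k : nat -> nat) (j : nat) : Prop :=
  (k j <= 3)%N /\
  forall q, (q <= k j)%N -> part_bound (k j) q <= part_val G s p j q.

(* Good [g] lies in part [p g] of bundle [s g]; part [0] is the base part and
   [k j] is the number of extra parts of bundle [j].  Every bundle but [B] is
   good; [B = na] exempts none. *)
Definition good_but (na : nat) (G : seq nat) (s p k : nat -> nat) (B : nat) :=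
  {in G, forall g, (s g < na)%N} /\
  forall j, (j < na)%N -> j != B -> good_bundle G s p k j.

Definition good_partition (na : nat) (G : seq nat) : Prop :=
  exists s p k, good_but na G s p k na.

Let sum_subpred (G : seq nat) (P Q : pred nat) :
  {in G, forall x, P x -> Q x} ->
  \sum_(x <- G | P x) w x <= \sum_(x <- G | Q x) w x.
Proof. by apply: ler_sum_predW => x _; apply: w_ge0. Qed.

Lemma good_butW na G s p k B : good_but na G s p k na -> good_but na G s p k B.
Proof.
by case=> lt_s good; split=> // j lt_j _; apply: good => //; rewrite neq_ltn lt_j.
Qed.

Lemma good_partition_drop na G X s p k B :
  (1 < na)%N -> (B < na)%N -> good_but na G s p k B ->
  {in G, forall g, g \in X -> s g = B} ->
  good_partition na.-1 [seq g <- G | g \notin X].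
Proof.
move=> na_gt1 B_lt [lt_s good] XB.
(* The survivors of bundle [B] join bundle [t] as base goods; bundle [na.-1]
   takes the free label [B]. *)
pose t := if B == 0%N then 1%N else 0%N.
pose relabel j := if j == na.-1 then B else j.
pose s' g := relabel (if s g == B then t else s g).
pose p' g := if s g == B then 0%N else p g.
pose old j := if j == B then na.-1 else j.
pose k' j := k (old j).
have t_lt : (t < na)%N by rewrite /t; case: ifP; lia.
have t_neq : t != B by rewrite /t; case: (B =P 0%N) => [->|/eqP]; lia.
clearbody t.
exists s', p', k'; split.
  move=> g; rewrite mem_filter => /andP[_ /lt_s]; rewrite /s' /relabel.
  by case: ifP => [/eqP|/negbT]; case: ifP => /eqP; lia.
move=> j lt_j _; set j' := old j.
have j'_lt : (j' < na)%N by rewrite /j' /old; case: (j =P B); lia.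
have j'_neq : j' != B by rewrite /j' /old; case: (j =P B) => [|/eqP]; lia.
have [k_le3 part_ge] := good j' j'_lt j'_neq.
suff mono q : part_val G s p j' q <= part_val [seq g <- G | g \notin X] s' p' j q.
  by split=> // q /part_ge /le_trans; apply.
rewrite /part_val big_filter_cond; apply: sum_subpred => g gG /andP[/eqP sg /eqP pg].
have sgB : s g != B by rewrite sg.
have -> : g \notin X by apply: contra sgB => /(XB g gG) ->.
rewrite /p' /s' (negbTE sgB) pg eqxx andbT /relabel sg /j' /old.
by case: (j =P B) => [->|_] /=; rewrite ?eqxx //= (ltn_eqF lt_j) eqxx.
Qed.

Lemma good_but_swap na G s p k B x a :
  uniq G -> x \in G -> a \in G -> s a = B -> s x != B -> w x <= w a ->
  good_but na G s p k B ->
  good_but na G (s \o swapn x a) (p \o swapn x a) k B.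
Proof.
move=> G_uniq xG aG saB sxB le_xa [lt_s good]; split.
  move=> g gG /=; apply: lt_s; move: gG.
  by rewrite -(perm_mem (perm_map_swapn G_uniq xG aG)) => /mapP[y yG ->]; rewrite swapnK.
move=> j lt_j neq_jB; have [k_le3 part_ge] := good j lt_j neq_jB.
suff mono q : part_val G s p j q <= part_val G (s \o swapn x a) (p \o swapn x a) j q.
  by split=> // q /part_ge /le_trans; apply.
rewrite /part_val -[leRHS](perm_big _ (perm_map_swapn G_uniq xG aG)) big_map /=.
under [leRHS]eq_bigl do rewrite !swapnK.
apply: ler_sum => g /andP[/eqP sgj _]; rewrite /swapn.
case: eqP => [-> //|_]; case: eqP => // gaE.
by move: neq_jB; rewrite -sgj gaE saB eqxx.
Qed.

Lemma good_but_gather na G Xs Ys s p k B :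
  uniq G -> uniq Xs -> uniq Ys -> {subset Xs <= G} -> {subset Ys <= G} ->
  {in Ys, forall y, y \notin Xs} -> {in Ys & Xs, forall y x, w x <= w y} ->
  good_but na G s p k B ->
  (count (fun g => s g != B) Xs <= count (fun g => s g == B) Ys)%N ->
  exists s' p', good_but na G s' p' k B /\ {in Xs, forall x, s' x = B}.
Proof.
move=> G_uniq Xs_uniq Ys_uniq XsG YsG YsXs le_YsXs.
move e : (count (fun g => s g != B) Xs) => c.
elim: c s p e => [|c IH] s p e good le_count.
  exists s, p; split=> // x xXs.
  by move/eqP: e; rewrite -leqn0 leqNgt -has_count => /hasPn/(_ x xXs)/negPn/eqP.
have /hasP[x xXs sxB] : has (fun g => s g != B) Xs by rewrite has_count e.
have /hasP[a aYs /eqP saB] : has (fun g => s g == B) Ys.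
  by rewrite has_count (leq_trans _ le_count).
have aXs : a \notin Xs := YsXs a aYs.
have xYs : x \notin Ys by apply: contra aXs => xYs; have := YsXs x xYs; rewrite xXs.
apply: (IH (s \o swapn x a) (p \o swapn x a)).
- have := count_swapn (fun g => s g != B) Xs_uniq xXs aXs.
  by rewrite /= e sxB saB eqxx /= addn1 addn0 => -[].
- exact: good_but_swap G_uniq (XsG x xXs) (YsG a aYs) saB sxB (le_YsXs a x aYs xXs) good.
- have := count_swapn (fun g => s g == B) Ys_uniq aYs xYs.
  rewrite (eq_count (a2 := (fun g => s g == B) \o swapn x a)); last first.
    by move=> g; rewrite /= swapnC.
  rewrite /= saB eqxx (negbTE sxB) /= addn1 addn0 => count_Ys.
  by move: le_count; rewrite -count_Ys ltnS.
Qed.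

Lemma noninc_nth m G a b :
  sorted ltn G -> {in G, forall g, (g < m)%N} ->
  {homo w : x y / (x <= y)%N >-> y <= x} -> (a <= b)%N ->
  w (nth m G b) <= w (nth m G a).
Proof.
move=> G_sorted lt_m w_noninc le_ab; apply: w_noninc.
have [lt_b|le_b] := ltnP b (size G); last first.
  rewrite [nth m G b]nth_default //; have [lt_a|le_a] := ltnP a (size G).
    by apply: ltnW; apply/lt_m/mem_nth.
  by rewrite nth_default.
have G_sorted' : sorted leq G by apply: sub_sorted G_sorted => x y /ltnW.
by apply: (sorted_leq_nth leq_trans leqnn) => //; rewrite inE; lia.
Qed.

Lemma good_partition_gather_block na G t0 r :
  sorted ltn G -> {homo w : x y / (x <= y)%N >-> y <= x} ->
  (1 < na)%N -> (r.-1 * na.-1 <= t0)%N -> good_partition na G ->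
  exists s p k B, [/\ (B < na)%N, good_but na G s p k B &
                      {in take r (drop t0 G), forall x, s x = B}].
Proof.
move=> G_sorted w_noninc na_gt1 le_t0 [s [p [k good]]].
have G_uniq : uniq G := sorted_uniq ltn_trans ltnn G_sorted.
set Ys := take t0 G; set Xs := take r (drop t0 G).
have YsG : {subset Ys <= G} by move=> y /mem_take.
have XsG : {subset Xs <= G} by move=> x /mem_take /mem_drop.
have [lt_s _] := good.
have lt_s_YsXs : {in Ys ++ Xs, forall g, (s g < na)%N}.
  by move=> g; rewrite mem_cat => /orP[/YsG|/XsG] /lt_s.
have [B lt_B le_size] := pigeonhole_label (ltnW na_gt1) lt_s_YsXs.
have le_Ys : ((size Xs).-1 * na.-1 <= size Ys)%N.
  rewrite !size_take_min size_drop; case: (leqP t0 (size G)) => le_t0G.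
    by apply: leq_trans le_t0; apply: leq_mul => //; lia.
  by have -> : (size G - t0 = 0)%N by lia.
have le_count : (count (fun g => s g != B) Xs <= count (fun g => s g == B) Ys)%N.
  have : (count (fun g => s g == B) Xs + count (fun g => s g != B) Xs = size Xs)%N.
    exact: count_predC.
  by move: le_size; rewrite size_cat count_cat; nia.
have /andP[lt_YsXs _] : allrel ltn Ys (drop t0 G) && pairwise ltn (drop t0 G).
  move: G_sorted; rewrite sorted_pairwise; last exact: ltn_trans.
  by rewrite -{1}(cat_take_drop t0 G) pairwise_cat => /and3P[-> _ ->].
have YsXs : {in Ys, forall y, y \notin Xs}.
  by move=> y yYs; apply/negP => /mem_take yD; have := allrelP lt_YsXs y y yYs yD; lia.
have le_YsXs : {in Ys & Xs, forall y x, w x <= w y}.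
  by move=> y x yYs /mem_take xD; apply/w_noninc/ltnW/(allrelP lt_YsXs).
have [s' [p' [good' XsB]]] := good_but_gather G_uniq (take_uniq _ (drop_uniq _ G_uniq))
  (take_uniq _ G_uniq) XsG YsG YsXs le_YsXs (good_butW B good) le_count.
by exists s', p', k, B.
Qed.

Lemma good_partition_drop_block na G m t0 r :
  sorted ltn G -> {in G, forall g, (g < m)%N} ->
  {homo w : x y / (x <= y)%N >-> y <= x} ->
  (1 < na)%N -> (r.-1 * na.-1 <= t0)%N -> good_partition na G ->
  good_partition na.-1 [seq g <- G | g \notin [seq nth m G q | q <- iota t0 r]].
Proof.
move=> G_sorted lt_m w_noninc na_gt1 le_t0 part.
have [s [p [k [B [lt_B good XsB]]]]] :=
  good_partition_gather_block G_sorted w_noninc na_gt1 le_t0 part.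
apply: (good_partition_drop na_gt1 lt_B good) => g gG /mapP[q].
rewrite mem_iota => /andP[le_t0q lt_q] gE; rewrite gE in gG *; apply: XsB.
have lt_qG : (q < size G)%N.
  apply: contraTT gG; rewrite -leqNgt => /(nth_default m) ->.
  by apply/negP => /lt_m; rewrite ltnn.
have -> : nth m G q = nth m (take r (drop t0 G)) (q - t0).
  by rewrite nth_take ?nth_drop ?subnKC //; lia.
have lt_qXs : (q - t0 < size (take r (drop t0 G)))%N.
  by rewrite size_take_min size_drop; lia.
exact: mem_nth lt_qXs.
Qed.

Lemma good_partition_drop1 na G X g :
  (1 < na)%N -> {in G, forall x, x \in X -> x = g} -> good_partition na G ->
  good_partition na.-1 [seq x <- G | x \notin X].
Proof.
move=> na_gt1 Xg [s [p [k good]]]; have [lt_s _] := good.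
pose B := if g \in G then s g else 0%N.
apply: (good_partition_drop na_gt1 _ (good_butW B good)).
  by rewrite /B; case: ifP => [/lt_s|_] //; lia.
by move=> x xG /(Xg x xG) xg; rewrite /B -xg xG.
Qed.

Lemma part_bound_ge K q : 0 <= alpha -> (K <= 3)%N -> 1 - alpha <= part_bound K q.
Proof.
move=> alpha_ge0 le_K3; rewrite /part_bound; case: eqP => // _.
have : K%:R <= 3 :> R by rewrite (ler_nat R K 3).
by nra.
Qed.

Lemma good_bundle_rest G s p k h :
  uniq G -> h \in G -> w h < alpha -> good_bundle G s p k (s h) ->
  1 - alpha <= \sum_(x <- G | (s x == s h) && (x != h)) w x.
Proof.
move=> G_uniq hG w_h [k_le3 part_ge].
have alpha_ge0 : 0 <= alpha := le_trans (w_ge0 h) (ltW w_h).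
have [k0|k_gt0] := posnP (k (s h)).
  have := part_ge 0%N (leq0n _); rewrite /part_bound eqxx k0 mul0r subr0 /part_val.
  have := ler_sumD1 (fun x => (s x == s h) && (p x == 0%N)) G_uniq hG (fun x _ => w_ge0 x).
  have : \sum_(x <- G | (s x == s h) && (p x == 0%N) && (x != h)) w x
      <= \sum_(x <- G | (s x == s h) && (x != h)) w x.
    by apply: sum_subpred => x _ /andP[/andP[-> _] ->].
  by lra.
pose q := if p h == 0%N then 1%N else 0%N.
apply: le_trans (part_bound_ge q alpha_ge0 k_le3) _.
apply: le_trans (part_ge q _) _; first by rewrite /q; case: ifP; lia.
apply: sum_subpred => x _ /andP[-> /eqP pxq] /=; apply/eqP => xh.
by move: pxq; rewrite xh /q; case: (p h =P 0%N) => [->|]; lia.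
Qed.

Section Merge.
Variables (na : nat) (G : seq nat) (s p k : nat -> nat) (h g : nat).
Hypotheses (G_uniq : uniq G) (hG : h \in G) (gG : g \in G) (sgh : s g != s h).
Hypotheses (w_h : w h < alpha) (w_g : w g <= alpha / 3).
Hypothesis good : good_but na G s p k na.

(* [g] moves to the bundle of [h], and the rest of that bundle becomes part
   [q0] of the bundle of [g]: a new extra part if [g] was a base good and there
   is room, otherwise the part [g] left. *)
Let j0 := s h.
Let k0 := s g.
Let K := k k0.
Let new_part := (p g == 0%N) && (K < 3)%N.
Let q0 := if new_part then K.+1 else p g.
Let s' x := if x == g then j0 else if (s x == j0) && (x != h) then k0 else s x.
Let p' x := if (s x == j0) && (x != h) then q0 else p x.
Let k' j := if j == k0 then (if new_part then K.+1 else K) else k j.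

Let neq_k0j0 : (k0 == j0) = false.
Proof. exact: negbTE. Qed.

Lemma merge_part_val r :
  part_val G s p k0 r - (if p g == r then w g else 0) <= part_val G s' p' k0 r.
Proof.
pose P x := (s x == k0) && (p x == r).
have : \sum_(x <- G | P x && (x != g)) w x <= part_val G s' p' k0 r.
  apply: sum_subpred => x _ /andP[/andP[/eqP sx /eqP px] xg].
  by rewrite /s' /p' (negbTE xg) sx neq_k0j0 px !eqxx.
apply: le_trans; rewrite lerBlDr; case: eqP => [pgr|/eqP pgr].
  by apply: ler_sumD1 => // x _; apply: w_ge0.
rewrite addr0; apply: sum_subpred => x _ Px; apply/andP; split=> //.
by apply: contra_neq pgr => xg; move: Px; rewrite xg => /andP[_ /eqP].
Qed.

Lemma merge_part_rest :
  \sum_(x <- G | (s x == j0) && (x != h)) w x <= part_val G s' p' k0 q0.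
Proof.
apply: sum_subpred => x _ /andP[/eqP sx xh].
have xg : x != g by apply: contraTneq _ sgh => <-; rewrite sx negbK.
by rewrite /s' /p' (negbTE xg) sx xh !eqxx.
Qed.

Lemma merge_good_k0 : good_bundle G s' p' k' k0.
Proof.
have [lt_s good_j] := good.
have good_at x : x \in G -> good_bundle G s p k (s x).
  by move=> xG; apply: good_j; rewrite ?neq_ltn lt_s.
have [K_le3 part_ge] : good_bundle G s p k k0 := good_at g gG.
have rest_ge := good_bundle_rest G_uniq hG w_h (good_at h hG).
have alpha_ge0 : 0 <= alpha := le_trans (w_ge0 h) (ltW w_h).
rewrite /good_bundle /k' eqxx; case E : new_part.
  move: E => /andP[/eqP pg0 lt_K3]; split=> // r le_r.
  case: (r =P K.+1) => [->|/eqP neq_r].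
    have q0E : q0 = K.+1 by rewrite /q0 /new_part pg0 lt_K3.
    by move: merge_part_rest; rewrite q0E; apply: le_trans.
  apply: le_trans (merge_part_val r); rewrite pg0.
  have := part_ge r (_ : r <= K)%N; rewrite /part_bound -/K.
  case: (r =P 0%N) => [->|/eqP r0].
    rewrite eqxx -[K.+1]addn1 natrD mulrDl mul1r opprD addrA => /(_ isT) /lerB.
    by apply; exact: w_g.
  by rewrite eq_sym (negbTE r0) subr0 => /(_ ltac:(lia)).
have q0E : q0 = p g by rewrite /q0 E.
move: E => /negbT; rewrite negb_and => not_new; split=> // r le_r.
case: (r =P p g) => [->|/eqP neq_r]; last first.
  apply: le_trans (merge_part_val r).
  by rewrite eq_sym (negbTE neq_r) subr0; apply: part_ge.
move: merge_part_rest; rewrite q0E; apply: le_trans.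
rewrite /part_bound; case: (p g =P 0%N) => [pg0|_]; last exact: rest_ge.
have -> : K = 3%N by move: not_new; rewrite pg0 /=; lia.
by move: rest_ge; lra.
Qed.

Lemma merge_good_other j : (j < na)%N -> j != j0 -> j != k0 -> good_bundle G s' p' k' j.
Proof.
move=> lt_j neq_j0 neq_k0; have [lt_s good_j] := good.
have [le_k3 part_ge] : good_bundle G s p k j by apply: good_j; rewrite ?neq_ltn lt_j.
rewrite /good_bundle /k' (negbTE neq_k0); split=> // r /part_ge /le_trans; apply.
apply: sum_subpred => x _ /andP[/eqP sx /eqP px].
have xg : x != g by apply: contraTneq _ neq_k0 => xg; rewrite -sx xg negbK.
by rewrite /s' /p' (negbTE xg) sx (negbTE neq_j0) px !eqxx.
Qed.

Lemma good_partition_merge_drop :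
  (1 < na)%N -> good_partition na.-1 [seq x <- G | x \notin [:: h; g]].
Proof.
move=> na_gt1; have [lt_s _] := good.
have hg : h != g by apply: contraTneq _ sgh => ->; rewrite eqxx.
apply: (good_partition_drop (s := s') (p := p') (k := k') na_gt1 (lt_s h hG)).
  split=> [x xG|j lt_j neq_j0]; first by rewrite /s'; do !case: ifP => _ //; apply: lt_s.
  have [->|neq_k0] := eqVneq j k0; first exact: merge_good_k0.
  exact: merge_good_other.
by move=> x _; rewrite !inE => /orP[]/eqP ->; rewrite /s' ?eqxx ?(negbTE hg) ?andbF.
Qed.

End Merge.

Lemma good_partition_drop_pair na G h g :
  uniq G -> (1 < na)%N -> w h < alpha -> w g <= alpha / 3 ->
  good_partition na G -> good_partition na.-1 [seq x <- G | x \notin [:: h; g]].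
Proof.
move=> G_uniq na_gt1 w_h w_g part.
have [hG|hG] := boolP (h \in G); last first.
  apply: (good_partition_drop1 (g := g) na_gt1 _ part) => x xG; rewrite !inE.
  by case/orP=> /eqP xh //; rewrite -xh xG in hG.
have [gG|gG] := boolP (g \in G); last first.
  apply: (good_partition_drop1 (g := h) na_gt1 _ part) => x xG; rewrite !inE.
  by case/orP=> /eqP xg //; rewrite -xg xG in gG.
have [s [p [k good]]] := part; have [lt_s _] := good.
have [sgh|sgh] := eqVneq (s g) (s h); last first.
  exact: good_partition_merge_drop G_uniq hG gG sgh w_h w_g good na_gt1.
apply: (good_partition_drop na_gt1 (lt_s h hG) (good_butW _ good)) => x _.
by rewrite !inE => /orP[]/eqP ->.
Qed.

Lemma sum_part_val G s p j K :
  \sum_(q < K) part_val G s p j q = \sum_(g <- G | (s g == j) && (p g < K)%N) w g.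
Proof.
elim: K => [|K IH]; first by rewrite big_ord0 big_pred0 // => g; rewrite ltn0 andbF.
rewrite big_ord_recr /= IH [RHS](bigID (fun g => p g < K)%N) /=; congr (_ + _).
  by apply: eq_bigl => g; rewrite -andbA (andb_idl (@ltnW _ _)).
by apply: eq_bigl => g; rewrite -andbA ltnS; congr (_ && _); case: ltngtP.
Qed.

Lemma good_bundle_val G s p k j :
  3 / 4 <= alpha -> good_bundle G s p k j ->
  4 - 4 * alpha <= \sum_(g <- G | s g == j) w g.
Proof.
move=> alpha_ge [le_K3 part_ge]; set K := k j in le_K3 part_ge.
have le_parts : \sum_(q < K.+1) part_val G s p j q <= \sum_(g <- G | s g == j) w g.
  by rewrite sum_part_val; apply: sum_subpred => g _ /andP[].
have ge_parts : \sum_(q < K.+1) part_bound K q <= \sum_(q < K.+1) part_val G s p j q.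
  by apply: ler_sum => q _; apply: part_ge; rewrite -ltnS.
have bounds : \sum_(q < K.+1) part_bound K q = 1 - K%:R * (alpha / 3) + K%:R * (1 - alpha).
  rewrite big_ord_recl /part_bound eqxx; congr (_ + _).
  by rewrite (eq_bigr (fun _ => 1 - alpha)) ?sumr_const ?card_ord ?mulr_natl.
have : K%:R <= 3 :> R by rewrite ler_nat.
have : 0 <= K%:R :> R by [].
by nra.
Qed.

Lemma good_partition_MMS na G :
  (0 < na)%N -> 3 / 4 <= alpha -> good_partition na G -> 4 - 4 * alpha <= MMSd na w G.
Proof.
case: na => // na _ alpha_ge [s [p [k [lt_s good]]]].
pose f := [ffun q : 'I_(size G) => (inord (s (nth 0%N G q)) : 'I_na.+1)].
have bundle_valE (j : 'I_na.+1) : bundle_val w f j = \sum_(g <- G | s g == j) w g.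
  rewrite /bundle_val (big_nth 0%N) big_mkord; apply: eq_bigl => q.
  by rewrite ffunE -val_eqE /= inordK //; apply/lt_s/mem_nth.
apply: le_trans (le_bigmax _ _ f); apply/bigmin_geP; split.
  apply: le_trans (good_bundle_val alpha_ge (good 0%N isT isT)) _.
  by apply: sum_subpred.
move=> j _; rewrite bundle_valE.
by apply: good_bundle_val alpha_ge (good j _ _); rewrite ?neq_ltn ltn_ord.
Qed.

End Bundles.

Lemma good_partition_MMS_init (R : realFieldType) d (u : nat -> R) (G : seq nat) alpha :
  uniq G -> 0 < MMSd d u G -> good_partition (fun g => u g / MMSd d u G) alpha d G.
Proof.
move=> G_uniq mu_gt0; set mu := MMSd d u G.
have [f le_mu] : exists f : {ffun 'I_(size G) -> 'I_d}, forall j, mu <= bundle_val u f j.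
  case: (boolP [exists f : {ffun 'I_(size G) -> 'I_d}, [forall j, mu <= bundle_val u f j]]).
    by case/existsP=> f /forallP le_mu; exists f.
  move/existsPn=> none.
  suff : mu < mu by rewrite ltxx.
  rewrite {2}/mu /MMSd; apply/bigmax_ltP; split=> // f _.
  have /forallPn[j] := none f; rewrite -ltNge; apply: le_lt_trans; exact: bigmin_le.
pose s g := if insub (index g G) is Some q then val (f q) else 0%N.
exists s, (fun _ => 0%N), (fun _ => 0%N); split.
  move=> g gG; rewrite /s; case: insubP => [q _ _|]; first exact: ltn_ord.
  by rewrite index_mem gG.
move=> j lt_j _; split=> // q; rewrite leqn0 => /eqP ->.
rewrite /part_bound /part_val eqxx mul0r subr0.
have -> : \sum_(g <- G | (s g == j) && (0 == 0)%N) (u g / mu) =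
    bundle_val u f (Ordinal lt_j) / mu.
  rewrite /bundle_val mulr_suml (big_nth 0%N) big_mkord; apply: eq_bigl => r.
  by rewrite andbT /s index_uniq // valK -val_eqE.
by rewrite ler_pdivlMr // mul1r.
Qed.

Section OrderedValuation.
Variables (R : realFieldType) (n m : nat) (v : 'I_n -> 'I_m -> R) (i : 'I_n).
Hypothesis v_ge0 : forall g, 0 <= v i g.

Let sorted_vals := sort (fun x y : R => y <= x) [seq v i g | g <- enum 'I_m].

Lemma ordv_ge0 j : 0 <= ordv v i j.
Proof.
rewrite /ordv -/sorted_vals; have [lt_j|le_j] := ltnP j (size sorted_vals).
  have : nth 0 sorted_vals j \in [seq v i g | g <- enum 'I_m].
    by rewrite -(mem_sort (fun x y : R => y <= x)) mem_nth.
  by case/mapP=> g _ ->.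
by rewrite nth_default.
Qed.

Lemma ordv_noninc : {homo ordv v i : a b / (a <= b)%N >-> b <= a}.
Proof.
move=> a b le_ab; rewrite /ordv -/sorted_vals.
have [lt_b|le_b] := ltnP b (size sorted_vals); last first.
  by rewrite [X in X <= _]nth_default //; apply: ordv_ge0.
apply: (sorted_leq_nth (leT := fun x y : R => y <= x)) => //.
- by move=> x y z /= le_yx le_zy; apply: le_trans le_zy le_yx.
- by apply: sort_sorted => x y; apply: le_total.
- by rewrite inE (leq_ltn_trans le_ab).
Qed.

End OrderedValuation.

Lemma rule_goods_block m G k na : (2 <= k <= 3)%N -> (0 < na)%N ->
  rule_goods m G k na = [seq nth m G q | q <- iota (k * na.-1) k.+1].
Proof.
move=> k_23 na_gt0; rewrite /rule_goods; congr (map _ _).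
by case: k k_23 => [|[|[|[|k]]]] // _; rewrite /rule_pos /=; do !congr (_ :: _); lia.
Qed.

Section Reduction.
Variables (R : realFieldType) (n m : nat) (v : 'I_n -> 'I_m -> R) (eps : R) (i : 'I_n).
Hypotheses (v_ge0 : forall j g, 0 <= v j g) (mms_gt0 : 0 < MMSd n (ordv v i) (iota 0 m)).

Local Notation alpha := (3 / 4 + eps).
Local Notation w := (normv v i).

Lemma normv_ge0 g : 0 <= w g.
Proof. by apply: divr_ge0; [apply: ordv_ge0 | apply: ltW]. Qed.

Lemma normv_noninc : {homo w : a b / (a <= b)%N >-> b <= a}.
Proof.
by move=> a b le_ab; apply: ler_wpM2r (ordv_noninc (v_ge0 i) le_ab); rewrite invr_ge0 ltW.
Qed.

Lemma red_step_good A G A' G' :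
  sorted ltn G -> {in G, forall g, (g < m)%N} -> i \in A' ->
  red_step m alpha (normv v) A G A' G' ->
  good_partition w alpha (size A) G -> good_partition w alpha (size A') G'.
Proof.
move=> G_sorted lt_m iA' [k [i0 [/andP[k_ge1 k_le4] not_applicable i0A _ [eA eG]]]].
subst A' G'; have iA : i \in A := mem_rem iA'.
have rem_gt0 : (0 < size (rem i0 A))%N by case: (rem i0 A) iA'.
rewrite size_rem // in rem_gt0 *; set na := size A in rem_gt0 *.
have na_gt1 : (1 < na)%N by lia.
have below k' : (0 < k' < k)%N -> rule_val m (normv v) A G k' i < alpha.
  move=> lt_k'; rewrite ltNge; apply/negP => ge.
  by apply: (not_applicable k' lt_k'); exists i.
have G_uniq : uniq G := sorted_uniq ltn_trans ltnn G_sorted.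
clear not_applicable; case: k k_ge1 k_le4 below => [|[|[|[|[|//]]]]] // _ _ below.
- apply: (good_partition_drop1 normv_ge0 (g := nth m G 0)) => // x _.
  by rewrite inE => /eqP.
- rewrite rule_goods_block ?(ltnW na_gt1) //.
  exact: (good_partition_drop_block normv_ge0 (r := 3) G_sorted lt_m normv_noninc na_gt1).
- rewrite rule_goods_block ?(ltnW na_gt1) //.
  exact: (good_partition_drop_block normv_ge0 (r := 4) G_sorted lt_m normv_noninc na_gt1).
have := below 1%N isT; have := below 2%N isT.
rewrite /rule_val /rule_goods /= !big_cons big_nil !addr0 => w_block w_first.
apply: (good_partition_drop_pair normv_ge0 G_uniq na_gt1 w_first).
have le_nth a : (a <= 2 * na)%N -> w (nth m G (2 * na)) <= w (nth m G a).
  exact: noninc_nth G_sorted lt_m normv_noninc.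
have := le_nth (2 * na - 2)%N (leq_subr _ _); have := le_nth (2 * na - 1)%N (leq_subr _ _).
by move: w_block; lra.
Qed.

Lemma red_reach_good A G :
  red_reach m alpha (normv v) (enum 'I_n) (iota 0 m) A G ->
  [/\ sorted ltn G, {in G, forall g, (g < m)%N} &
      i \in A -> good_partition w alpha (size A) G].
Proof.
elim=> [|A1 G1 A2 G2 _ [G1_sorted lt_m good] step].
  split=> [|g|_]; [exact: iota_ltn_sorted | by rewrite mem_iota | ].
  by rewrite size_enum_ord; apply: good_partition_MMS_init (iota_uniq 0 m) mms_gt0.
have [k [i0 [_ _ _ _ [eA eG]]]] := step.
split=> [|g|iA2].
- by rewrite eG; apply: sorted_filter G1_sorted; apply: ltn_trans.
- by rewrite eG mem_filter => /andP[_ /lt_m].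
- have iA1 : i \in A1 by move: iA2; rewrite eA; apply: mem_rem.
  exact: red_step_good G1_sorted lt_m iA2 step (good iA1).
Qed.

End Reduction.

Theorem theorem13 (R : realFieldType) (n m : nat) (v : 'I_n -> 'I_m -> R) (eps : R) :
  (forall i g, 0 <= v i g) ->
  (forall i, 0 < MMSd n (ordv v i) (iota 0 m)) ->
  0 <= eps ->
  forall (A : seq 'I_n) (G : seq nat), reduce_output v eps A G ->
  forall i, i \in A -> 1 - 4 * eps <= MMSd (size A) (normv v i) G.
Proof.
move=> v_ge0 mms_gt0 eps_ge0 A G [reach _] i iA.
have [_ _ /(_ iA) good] := red_reach_good v_ge0 (mms_gt0 i) reach.
have -> : 1 - 4 * eps = 4 - 4 * (3 / 4 + eps) by field.
have A_gt0 : (0 < size A)%N by case: (A) iA.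
have alpha_ge : 3 / 4 <= 3 / 4 + eps by lra.
exact (good_partition_MMS (normv_ge0 v_ge0 (mms_gt0 i)) A_gt0 alpha_ge good).
Qed.
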